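(* Let $s,t,\eta>0$, $A\in\mathbb{R}^{m\times N}$ and $K\subset[N]$. Suppose there exists $\nu\in\mathbb{R}^m$ with $A^T\nu\in H_K^t$ and $\|\nu\|_2\le s$. Let $x_0=\mathbb{1}_K$ and $b=Ax_0+n$ with $n\in\mathbb{R}^m$, $\|n\|_2\le\eta$. Then any solution $x_*$ of $$\min\|Ax-b\|_2\ \text{subject to}\ x\in[0,1]^N,$$ or of $$\min\|x\|_1\ \text{subject to}\ \|Ax-b\|_2\le\eta,\ x\in[0,1]^N,$$ satisfies $\|x_*-x_0\|_2\le \frac{2s}{t}\eta$.
   Context: $\mathbb{1}_K$ is the indicator vector of $K\subset[N]$. For $t>0$, $H_K^t=\{w\in\mathbb{R}^N: w_i<-t \text{ for } i\in K,\ w_i>t \text{ for } i\notin K\}$. *)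

(* vectors in R^N are column vectors 'cV[R]_N over an rcfType R
   (real closed field, so that Num.sqrt is available). *)
From mathcomp Require Import all_boot all_order all_algebra.
Set Implicit Arguments. Unset Strict Implicit. Unset Printing Implicit Defensive.
Import Order.TTheory GRing.Theory Num.Theory.
Local Open Scope ring_scope.

Definition norm2 {R : rcfType} {n : nat} (v : 'cV[R]_n) : R :=
  Num.sqrt (\sum_(i < n) v i 0 ^+ 2).

Definition norm1 {R : rcfType} {n : nat} (v : 'cV[R]_n) : R :=
  \sum_(i < n) `|v i 0|.

Definition indic {R : rcfType} {N : nat} (K : {set 'I_N}) : 'cV[R]_N :=
  \col_i (if i \in K then 1 else 0).

Definition in_HK {R : rcfType} {N : nat} (K : {set 'I_N}) (t : R) (w : 'cV[R]_N) : Prop :=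
  forall i : 'I_N, (i \in K -> w i 0 < - t) /\ (i \notin K -> t < w i 0).

Definition in_box {R : rcfType} {N : nat} (x : 'cV[R]_N) : Prop :=
  forall i : 'I_N, 0 <= x i 0 <= 1.

Definition solves_box_LS {R : rcfType} {m N : nat} (A : 'M[R]_(m, N)) (b : 'cV[R]_m)
  (x : 'cV[R]_N) : Prop :=
  in_box x /\ forall y : 'cV[R]_N, in_box y -> norm2 (A *m x - b) <= norm2 (A *m y - b).

Definition feas_BP {R : rcfType} {m N : nat} (A : 'M[R]_(m, N)) (b : 'cV[R]_m) (eta : R)
  (x : 'cV[R]_N) : Prop :=
  norm2 (A *m x - b) <= eta /\ in_box x.

Definition solves_box_BP {R : rcfType} {m N : nat} (A : 'M[R]_(m, N)) (b : 'cV[R]_m) (eta : R)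
  (x : 'cV[R]_N) : Prop :=
  feas_BP A b eta x /\ forall y : 'cV[R]_N, feas_BP A b eta y -> norm1 x <= norm1 y.

(* For x in the box, h := x - 1_K is nonpositive on K and nonnegative off K,
   so the certificate w := A^T nu in H_K^t gives <w, h> >= t ||h||_1 >= t ||h||_2.
   Moving A^T across, <w, h> = <nu, A h> <= s ||A h||_2.  Both programs return a
   box point with ||A x - b||_2 <= eta (least squares does at least as well as
   x0, whose residual is -n), hence ||A h||_2 <= 2 eta. *)
From mathcomp Require Import all_boot all_order all_algebra.
From mathcomp Require Import ring lra.
Import Order.TTheory GRing.Theory Num.Theory.
Local Open Scope ring_scope.
Set Implicit Arguments. Unset Strict Implicit.

Section CauchySchwarz.
Variables (R : rcfType) (k : nat).
Implicit Types a b : 'I_k -> R.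

Lemma sum_Lagrange a b :
  ((\sum_i a i ^+ 2) * (\sum_j b j ^+ 2) - (\sum_i a i * b i) ^+ 2) *+ 2 =
  \sum_i \sum_j (a i * b j - a j * b i) ^+ 2.
Proof.
have UV : (\sum_i a i ^+ 2) * (\sum_j b j ^+ 2) =
    \sum_i \sum_j a i ^+ 2 * b j ^+ 2 by rewrite big_distrlr.
have VU : (\sum_i a i ^+ 2) * (\sum_j b j ^+ 2) =
    \sum_i \sum_j a j ^+ 2 * b i ^+ 2.
  by rewrite mulrC big_distrlr; apply: eq_bigr => i _; apply: eq_bigr => j _; rewrite mulrC.
have SS : (\sum_i a i * b i) ^+ 2 = \sum_i \sum_j (a i * b i) * (a j * b j).
  by rewrite expr2 big_distrlr.
rewrite mulrnBl mulr2n {1}UV VU SS -big_split -sumrMnl -sumrB /=.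
apply: eq_bigr => i _; rewrite -big_split -sumrMnl -sumrB /=.
by apply: eq_bigr => j _; ring.
Qed.

Lemma sum_CauchySchwarz a b :
  (\sum_i a i * b i) ^+ 2 <= (\sum_i a i ^+ 2) * (\sum_i b i ^+ 2).
Proof.
rewrite -subr_ge0 -(pmulrn_lge0 _ (isT : (0 < 2)%N)) sum_Lagrange.
by apply: sumr_ge0 => i _; apply: sumr_ge0 => j _; apply: sqr_ge0.
Qed.

Lemma sum_sqr_le_sqr_sum a : (forall i, 0 <= a i) ->
  \sum_i a i ^+ 2 <= (\sum_i a i) ^+ 2.
Proof.
move=> a_ge0; rewrite [leRHS]expr2 mulr_suml; apply: ler_sum => i _.
rewrite expr2 ler_wpM2l // (bigD1 i) //= lerDl.
by apply: sumr_ge0 => j _.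
Qed.

End CauchySchwarz.

Definition dotv {R : rcfType} {k : nat} (u v : 'cV[R]_k) : R := (u^T *m v) 0 0.

Section EuclideanNorm.
Variables (R : rcfType) (k : nat).
Implicit Types u v : 'cV[R]_k.

Lemma dotvE u v : dotv u v = \sum_i u i 0 * v i 0.
Proof. by rewrite /dotv mxE; apply: eq_bigr => i _; rewrite mxE. Qed.

Lemma dotvC u v : dotv u v = dotv v u.
Proof. by rewrite !dotvE; apply: eq_bigr => i _; rewrite mulrC. Qed.

Lemma dotvDl u v w : dotv (u + v) w = dotv u w + dotv v w.
Proof. by rewrite /dotv raddfD /= mulmxDl mxE. Qed.

Lemma dotvNl u v : dotv (- u) v = - dotv u v.
Proof. by rewrite /dotv raddfN /= mulNmx mxE. Qed.

Lemma dotv_trmx m (A : 'M[R]_(m, k)) (w : 'cV[R]_m) u :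
  dotv (A^T *m w) u = dotv w (A *m u).
Proof. by rewrite /dotv trmx_mul trmxK mulmxA. Qed.

Lemma dotvv u : dotv u u = \sum_i u i 0 ^+ 2.
Proof. by rewrite dotvE; under eq_bigr do rewrite -expr2. Qed.

Lemma dotv_ge0 u : 0 <= dotv u u.
Proof. by rewrite dotvv; apply: sumr_ge0 => i _; apply: sqr_ge0. Qed.

Lemma norm2E u : norm2 u = Num.sqrt (dotv u u).
Proof. by rewrite dotvv. Qed.

Lemma norm2_ge0 u : 0 <= norm2 u.
Proof. exact: sqrtr_ge0. Qed.

Lemma sqr_norm2 u : norm2 u ^+ 2 = dotv u u.
Proof. by rewrite norm2E sqr_sqrtr // dotv_ge0. Qed.

Lemma norm2N u : norm2 (- u) = norm2 u.
Proof. by rewrite !norm2E dotvNl dotvC dotvNl opprK. Qed.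

Lemma dotv_le_norm2 u v : dotv u v <= norm2 u * norm2 v.
Proof.
rewrite !norm2E -sqrtrM ?dotv_ge0 // (le_trans (ler_norm _)) // -sqrtr_sqr.
by rewrite ler_wsqrtr // !dotvv dotvE sum_CauchySchwarz.
Qed.

Lemma norm2D_le u v : norm2 (u + v) <= norm2 u + norm2 v.
Proof.
rewrite -(ler_pXn2r (isT : (0 < 2)%N)) ?nnegrE ?addr_ge0 ?norm2_ge0 //.
rewrite sqr_norm2 sqrrD !sqr_norm2 dotvDl !(dotvC _ (u + v)) !dotvDl (dotvC v u).
have := dotv_le_norm2 u v; lra.
Qed.

Lemma norm2_le_norm1 u : norm2 u <= norm1 u.
Proof.
have norm1_ge0 : 0 <= norm1 u by apply: sumr_ge0.
rewrite /norm2 -(ger0_norm norm1_ge0) -sqrtr_sqr ler_wsqrtr //.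
under eq_bigr do rewrite -real_normK ?num_real //.
exact: sum_sqr_le_sqr_sum.
Qed.

End EuclideanNorm.

Section BoxRecovery.
Variables (R : rcfType) (m N : nat) (A : 'M[R]_(m, N)) (K : {set 'I_N}).

Lemma indic_in_box : in_box (indic K : 'cV[R]_N).
Proof. by move=> i; rewrite mxE; case: (i \in K); rewrite /= ?lexx ler01. Qed.

Lemma box_solutions_feas_BP (n : 'cV[R]_m) eta x :
  let b := A *m indic K + n in
  norm2 n <= eta -> solves_box_LS A b x \/ solves_box_BP A b eta x ->
  feas_BP A b eta x.
Proof.
move=> b n_le [[x_box LS_opt]|[]] //; split=> //.
apply: le_trans (LS_opt _ indic_in_box) _.
by rewrite /b opprD addrA subrr add0r norm2N.
Qed.

Lemma in_HK_box_dotv t (w x : 'cV[R]_N) : in_HK K t w -> in_box x ->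
  t * norm1 (x - indic K) <= dotv w (x - indic K).
Proof.
move=> wHK x_box; rewrite dotvE /norm1 mulr_sumr; apply: ler_sum => i _.
rewrite !mxE; have /andP[xi_ge0 xi_le1] := x_box i; have [wK wKc] := wHK i.
case: (boolP (i \in K)) => iK.
- by have := wK iK; rewrite ler0_norm ?subr_le0 //; nra.
- by have := wKc iK; rewrite subr0 ger0_norm //; nra.
Qed.

Lemma box_deviation_le t (nu : 'cV[R]_m) x :
  0 <= t -> in_HK K t (A^T *m nu) -> in_box x ->
  t * norm2 (x - indic K) <= norm2 nu * norm2 (A *m (x - indic K)).
Proof.
move=> t_ge0 nuHK x_box.
apply: le_trans (ler_wpM2l t_ge0 (norm2_le_norm1 _)) _.
apply: le_trans (in_HK_box_dotv nuHK x_box) _.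
by rewrite dotv_trmx dotv_le_norm2.
Qed.

End BoxRecovery.

Theorem proposition3p4 (R : rcfType) (m N : nat) (s t eta : R)
  (A : 'M[R]_(m, N)) (K : {set 'I_N}) (n : 'cV[R]_m) (x : 'cV[R]_N) :
  0 < s -> 0 < t -> 0 < eta ->
  (exists nu : 'cV[R]_m, in_HK K t (A^T *m nu) /\ norm2 nu <= s) ->
  norm2 n <= eta ->
  let x0 : 'cV[R]_N := indic K in
  let b : 'cV[R]_m := A *m x0 + n in
  (solves_box_LS A b x \/ solves_box_BP A b eta x) ->
  norm2 (x - x0) <= 2 * s / t * eta.
Proof.
move=> _ t_gt0 _ [nu [nuHK nu_le]] n_le x0 b sol.
have [res_le x_box] := box_solutions_feas_BP n_le sol.
have Ah_le : norm2 (A *m (x - x0)) <= 2 * eta.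
  have -> : A *m (x - x0) = (A *m x - b) + n by rewrite mulmxBr /b opprD addrA subrK.
  by rewrite mulr_natl mulr2n (le_trans (norm2D_le _ _)) // lerD.
have := box_deviation_le (ltW t_gt0) nuHK x_box.
have := norm2_ge0 nu; have := norm2_ge0 (A *m (x - x0)).
rewrite mulrAC ler_pdivlMr // mulrC; nra.
Qed.
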